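(* Let $L>0$, $N\in\mathbb N$, and let $\rho^N_L(t)$ be the deterministic particle approximation at a time $t$ (at which it is well defined), constructed from $\rho_{0,L}$ with $\int_{\mathbb T_L}\rho_{0,L}(x)\,dx=c_L$. Then $$\|\phi(\rho^N_L(t))\|_{L^\infty(\mathbb T_L)}\le\Big(\phi\Big(\frac{c_L}{L}\Big)+1\Big)+N\sum_{k=0}^{N-1}|\phi(\rho_{k+1}(t))-\phi(\rho_k(t))|^2.$$
   Context: $\phi:[0,\infty)\to[0,\infty)$ is a continuous strictly increasing function with $\phi(0)=0$ (in the paper $\phi(\rho)=\rho W'(\rho)-W(\rho)$ with further structural assumptions). $K:\mathbb R\to\mathbb R$ is even, continuous, $C^2$ away from $0$, with $K,K'$ bounded. $\mathbb T_L=\mathbb R/L\mathbb Z\cong[-L/2,L/2)$. Deterministic particle approximation: given $\rho_{0,L}\in L^\infty(\mathbb T_L)$, $\rho_{0,L}\ge0$, $c_L=\int_{\mathbb T_L}\rho_{0,L}\le1$, set $x_0=-L/2$, $x_k=\sup\{x:\int_{x_{k-1}}^x\rho_{0,L}<c_L/N\}$, $k=1,\dots,N$; particles $x_k(t)$ (indices mod $N$) solve $\dot x_k=-\frac{c_L}{N}\sum_{j\ne k}K'(x_k-x_j)-\frac{N}{c_L}[\phi(\rho_k)-\phi(\rho_{k-1})]$, $x_k(0)=x_k$, with $\rho_k(t)=\frac{c_L}{N(x_{k+1}(t)-x_k(t))}$, and $\rho^N_L(t,x)=\sum_{k=0}^{N-1}\rho_k(t)\chi_{[x_k(t),x_{k+1}(t))}(x)$;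 well defined at $t$ if $x_0(s)<\dots<x_{N-1}(s)$ for $s\in[0,t]$, in which case $\sum_{k=0}^{N-1}(x_{k+1}(t)-x_k(t))=L$. *)

From HB Require Import structures.
From mathcomp Require Import all_boot all_order all_algebra.
From mathcomp Require Import all_classical all_reals all_analysis ess_sup_inf.
Set Implicit Arguments. Unset Strict Implicit. Unset Printing Implicit Defensive.
Import Order.TTheory GRing.Theory Num.Theory.
Import numFieldNormedType.Exports.
Local Open Scope classical_set_scope.
Local Open Scope ring_scope.

Section Defs.
Variable R : realType.

(* Lifted positions: x_{k + mN} := x_k + m L  (indices mod N, x_N = x_0 + L). *)
Definition xext (N : nat) (L : R) (x : nat -> R) (k : nat) : R :=
  x (k %% N)%N + L * (k %/ N)%:R.

Definition rhok (c : R) (N : nat) (L : R) (x : nat -> R) (k : nat) : R :=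
  c / (N%:R * (xext N L x (k %% N).+1 - xext N L x (k %% N)%N)).

Definition rep (L x0 y : R) : R := y - L * (Num.floor ((y - x0) / L))%:~R.

Definition rhoNL (c : R) (N : nat) (L : R) (x : nat -> R) (y : R) : R :=
  let y' := rep L (x 0%N) y in
  \sum_(k < N) rhok c N L x k *
     (if (xext N L x k <= y') && (y' < xext N L x k.+1) then 1 else 0).

Lemma measurable_torus (L : R) :
  measurable (`[- (L / 2), L / 2[%classic : set R).
Proof. exact: measurable_itv. Qed.

(* || f ||_{L^oo(T_L)}, T_L identified with [-L/2, L/2) *)
Definition LinfT (L : R) (f : R -> R) : \bar R :=
  ess_sup (mrestr lebesgue_measure (measurable_torus L)) (fun y => (`|f y|)%:E).

Fixpoint init_pos (rho0 : R -> R) (c : R) (N : nat) (L : R) (k : nat) : R :=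
  match k with
  | 0%N => - (L / 2)
  | k'.+1 => let a := init_pos rho0 c N L k' in
      sup [set z : R | a <= z /\
        (\int[lebesgue_measure]_(y in `[a, z]) (rho0 y)%:E < (c / N%:R)%:E)%E]
  end.

Definition velocity (dK phi : R -> R) (c : R) (N : nat) (L : R)
  (x : nat -> R -> R) (k : nat) (s : R) : R :=
  let xs := fun j => x j s in
  - (c / N%:R) * (\sum_(j < N | j != k :> nat) dK (xs k - xs j))
  - (N%:R / c) * (phi (rhok c N L xs k) - phi (rhok c N L xs (k + N).-1)).

End Defs.

(** The particle density takes the values rho_0, ..., rho_(N-1) (or 0), so it
    suffices to bound every phi(rho_i). The N gaps x_(k+1) - x_k add up to L,
    hence one of them is at least L/N and the corresponding density is at most
    c/L; by monotonicity of phi, phi(rho_m) <= phi(c/L). Telescoping around the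
    circle, phi(rho_i) - phi(rho_m) is at most twice the total variation
    sum_k |phi(rho_(k+1)) - phi(rho_k)|, and 2a <= 1/N + N a^2 termwise turns
    that into 1 + N sum_k |phi(rho_(k+1)) - phi(rho_k)|^2. *)
From HB Require Import structures.
From mathcomp Require Import all_boot all_order all_algebra.
From mathcomp Require Import all_classical all_reals all_analysis ess_sup_inf.
From mathcomp Require Import ring lra.
Import Order.TTheory GRing.Theory Num.Theory.
Import numFieldNormedType.Exports.
Local Open Scope classical_set_scope.
Local Open Scope ring_scope.

Section RealSequences.
Context {R : realType}.

Lemma exists_ge_mean (a : nat -> R) n : (0 < n)%N ->
  exists m : 'I_n, \sum_(k < n) a k <= n%:R * a m.
Proof.
move=> n_gt0; apply/existsP; apply: contraT => /existsPn small.
have : \sum_(k < n) n%:R * a k < \sum_(k < n) \sum_(j < n) a j.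
  apply: ltr_sum => [|k _]; last by rewrite ltNge small.
  by apply/hasP; exists (Ordinal n_gt0); rewrite ?mem_index_enum.
by rewrite -mulr_sumr sumr_const card_ord mulr_natl ltxx.
Qed.

Lemma norm_sub_le_variation (P : nat -> R) n j : (j <= n)%N ->
  `|P j - P 0%N| <= \sum_(k < n) `|P k.+1 - P k|.
Proof.
move=> le_jn; rewrite -(telescope_sumr P) //.
rewrite -(big_mkord xpredT (fun k => `|P k.+1 - P k|)).
apply: (le_trans (ler_norm_sum _ _ _)).
by rewrite (big_cat_nat _ le_jn) //= lerDl sumr_ge0.
Qed.

Lemma double_sum_le_sum_sqr (a : nat -> R) n : (0 < n)%N ->
  2 * \sum_(k < n) a k <= 1 + n%:R * \sum_(k < n) a k ^+ 2.
Proof.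
move=> n_gt0; have n_neq0 : n%:R != 0 :> R by rewrite pnatr_eq0 -lt0n.
have -> : 1 + n%:R * \sum_(k < n) a k ^+ 2 = \sum_(k < n) (n%:R^-1 + n%:R * a k ^+ 2).
  by rewrite big_split sumr_const card_ord -[n%:R^-1 *+ n]mulr_natr mulVf // mulr_sumr.
rewrite mulr_sumr; apply: ler_sum => k _.
have -> : n%:R^-1 + n%:R * a k ^+ 2 = 2 * a k + (n%:R * a k - 1) ^+ 2 / n%:R.
  by field.
by rewrite lerDl divr_ge0 ?sqr_ge0.
Qed.

Lemma le_add_variation_sqr (P : nat -> R) n i m :
  (0 < n)%N -> (i <= n)%N -> (m <= n)%N ->
  P i <= P m + 1 + n%:R * \sum_(k < n) `|P k.+1 - P k| ^+ 2.
Proof.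
move=> n_gt0 le_in le_mn.
have := double_sum_le_sum_sqr (fun k => `|P k.+1 - P k|) _ n_gt0.
have := norm_sub_le_variation P _ _ le_in; have := norm_sub_le_variation P _ _ le_mn.
have := ler_norm (P i - P 0%N); have := ler_norm (P 0%N - P m).
rewrite distrC; lra.
Qed.

End RealSequences.

Section LiftedPositions.
Context {R : realType} {N : nat} {L : R} {xs : nat -> R}.
Hypothesis N_gt0 : (0 < N)%N.
Hypothesis xs_incr : forall k, (k.+1 < N)%N -> xs k < xs k.+1.
Hypothesis xs_last : xs N.-1 < xs 0%N + L.

Local Notation X := (xext N L xs).

Lemma xext_small k : (k < N)%N -> X k = xs k.
Proof. by move=> lt_kN; rewrite /xext modn_small // divn_small // mulr0 addr0. Qed.

Lemma xextN : X N = xs 0%N + L.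
Proof. by rewrite /xext modnn divnn N_gt0 mulr1. Qed.

Lemma xext_lt_succ k : (k < N)%N -> X k < X k.+1.
Proof.
move=> lt_kN; rewrite xext_small //.
have [lt_k1N | le_Nk1] := ltnP k.+1 N; first by rewrite xext_small // xs_incr.
have k1N : k.+1 = N by apply/eqP; rewrite eqn_leq lt_kN le_Nk1.
by rewrite k1N xextN; move: xs_last; rewrite -k1N.
Qed.

Lemma xext_le i j : (i <= j <= N)%N -> X i <= X j.
Proof.
case/andP=> le_ij le_jN; have le_iN := leq_trans le_ij le_jN.
apply: (homo_leq_in (D := [pred k | k <= N]%N) (r := <=%R)) => //=.
- exact: le_trans.
- by move=> a b _; rewrite !inE => le_bN k /andP[_ /ltnW /leq_trans]; apply.
- by move=> k _; rewrite inE => le_k1N; rewrite ltW // xext_lt_succ.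
Qed.

Lemma sum_gaps : \sum_(k < N) (X k.+1 - X k) = L.
Proof.
rewrite -(big_mkord xpredT (fun k => X k.+1 - X k)) telescope_sumr //.
by rewrite xextN xext_small // addrAC subrr add0r.
Qed.

Lemma L_gt0 : 0 < L.
Proof.
rewrite -sum_gaps (bigD1 (Ordinal N_gt0)) //= ltr_pwDl ?subr_gt0 ?xext_lt_succ //.
by rewrite sumr_ge0 // => k _; rewrite subr_ge0 ltW ?xext_lt_succ.
Qed.

Lemma cell_inj i j y : (i < N)%N -> (j < N)%N ->
  X i <= y < X i.+1 -> X j <= y < X j.+1 -> i = j.
Proof.
move=> lt_iN lt_jN /andP[yi iy] /andP[yj jy].
wlog le_ij : i j lt_iN lt_jN yi iy yj jy / (i <= j)%N.
  by move=> wlog_ij; case: (leqP i j) => [|/ltnW] /wlog_ij ->.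
apply/eqP; rewrite eqn_leq le_ij leqNgt; apply/negP => lt_ij.
have := xext_le i.+1 j; rewrite lt_ij (ltnW lt_jN); lra.
Qed.

Lemma rhoNL_cases c y :
  (exists i : 'I_N, rhoNL c N L xs y = rhok c N L xs i) \/ rhoNL c N L xs y = 0.
Proof.
rewrite /rhoNL; set y' := rep L (xs 0%N) y.
have [[i in_i] | none] := pselect (exists i : 'I_N, X i <= y' < X i.+1).
  left; exists i; rewrite (bigD1 i) //= in_i mulr1 big1 ?addr0 // => j ne_ji.
  case: ifP => [in_j|_]; last by rewrite mulr0.
  by move: ne_ji; rewrite (val_inj (cell_inj _ _ _ (ltn_ord j) (ltn_ord i) in_j in_i)) eqxx.
right; apply: big1 => i _; case: ifP => [in_i|_]; last by rewrite mulr0.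
by case: none; exists i.
Qed.

Lemma rhok_ge0 c k : 0 <= c -> 0 <= rhok c N L xs k.
Proof.
move=> c_ge0; rewrite /rhok divr_ge0 // mulr_ge0 // subr_ge0 ltW //.
by rewrite xext_lt_succ // ltn_mod.
Qed.

Lemma exists_rhok_le_mean c : 0 <= c -> exists m : 'I_N, rhok c N L xs m <= c / L.
Proof.
move=> c_ge0; have [m] := exists_ge_mean (fun k => X k.+1 - X k) _ N_gt0.
rewrite sum_gaps => L_le; exists m; rewrite /rhok modn_small //.
rewrite ler_wpM2l // lef_pV2 ?posrE ?L_gt0 //.
by rewrite (lt_le_trans L_gt0).
Qed.

End LiftedPositions.

Lemma LinfT_le (R : realType) (L B : R) (f : R -> R) :
  (forall y, `|f y| <= B) -> (LinfT L f <= B%:E)%E.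
Proof. by move=> f_le; apply/ess_supP; apply: nearW => y; rewrite lee_fin. Qed.

Theorem lemma4p5 (R : realType) (phi K dK ddK : R -> R) (L : R) (N : nat)
  (rho0 : R -> R) (c : R) (x : nat -> R -> R) (t : R) :
  (* phi : [0,oo) -> [0,oo) continuous, strictly increasing, phi 0 = 0 *)
  {within `[0, +oo[, continuous phi} ->
  {in `[0, +oo[ &, {homo phi : a b / a < b}} ->
  (forall r, 0 <= r -> 0 <= phi r) ->
  phi 0 = 0 ->
  (* K even, continuous, C^2 away from 0, K and K' bounded *)
  (forall y : R, K (- y) = K y) ->
  continuous K ->
  (forall y : R, y != 0 -> is_derive y 1 K (dK y)) ->
  (forall y : R, y != 0 -> is_derive y 1 dK (ddK y)) ->
  (forall y : R, y != 0 -> {for y, continuous ddK}) ->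
  (exists M, forall y, `|K y| <= M) ->
  (exists M, forall y, y != 0 -> `|dK y| <= M) ->
  (* L > 0, N >= 1 *)
  0 < L -> (0 < N)%N ->
  (* initial datum rho0 in L^oo(T_L), rho0 >= 0, of mass c_L <= 1 *)
  measurable_fun setT rho0 ->
  (forall y, 0 <= rho0 y) ->
  (forall y, rho0 (y + L) = rho0 y) ->
  (exists M : R, \forall y \ae lebesgue_measure, `|rho0 y| <= M) ->
  (\int[lebesgue_measure]_(y in `[(- (L / 2))%R, (L / 2)%R[) (rho0 y)%:E = c%:E)%E ->
  c <= 1 ->
  (* the particle system, solved on [0, t] *)
  0 <= t ->
  (forall k, (k < N)%N -> x k 0 = init_pos rho0 c N L k) ->
  (forall k, (k < N)%N -> {within `[0, t], continuous (x k)}) ->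
  (forall k, (k < N)%N -> forall s, 0 < s < t ->
     is_derive s 1 (x k) (velocity dK phi c N L x k s)) ->
  (* well-definedness: x_0(s) < ... < x_{N-1}(s) < x_N(s) = x_0(s) + L *)
  (forall s, 0 <= s <= t -> forall k, (k.+1 < N)%N -> x k s < x k.+1 s) ->
  (forall s, 0 <= s <= t -> x N.-1 s < x 0%N s + L) ->
  (LinfT L (fun y => phi (rhoNL c N L (fun j => x j t) y))
   <= ((phi (c / L) + 1)
       + N%:R * \sum_(k < N) `|phi (rhok c N L (fun j => x j t) k.+1)
                              - phi (rhok c N L (fun j => x j t) k)| ^+ 2)%:E)%E.
Proof.
move=> _ phi_incr phi_ge0 phi0 _ _ _ _ _ _ _ _ N_gt0 _ rho0_ge0 _ _ mass _
  t_ge0 _ _ _ xs_incr xs_last.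
have t_in : 0 <= t <= t by rewrite t_ge0 lexx.
set xs := fun j => x j t.
have {}xs_incr := xs_incr t t_in; have {}xs_last := xs_last t t_in.
have c_ge0 : 0 <= c.
  by rewrite -lee_fin -mass integral_ge0 // => y _; rewrite lee_fin rho0_ge0.
have phi_le a b : 0 <= a -> a <= b -> phi a <= phi b.
  move=> a_ge0 le_ab; apply: (ltW_homo_in phi_incr) => //;
    by rewrite in_itv /= andbT // (le_trans a_ge0).
have [m rhom_le] := exists_rhok_le_mean N_gt0 xs_incr xs_last _ c_ge0.
set P := fun k => phi (rhok c N L xs k).
have P_le i : (i < N)%N ->
    P i <= phi (c / L) + 1 + N%:R * \sum_(k < N) `|P k.+1 - P k| ^+ 2.
  move=> lt_iN; have lt_mN := ltn_ord m.
  apply: (le_trans (le_add_variation_sqr P _ _ _ N_gt0 (ltnW lt_iN) (ltnW lt_mN))).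
  by rewrite lerD2r lerD2r phi_le // rhok_ge0.
apply: LinfT_le => y.
have [[i ->] | ->] := rhoNL_cases N_gt0 xs_incr xs_last c y.
  by rewrite ger0_norm ?P_le // phi_ge0 // rhok_ge0.
by rewrite phi0 normr0 (le_trans _ (P_le m (ltn_ord m))) // phi_ge0 // rhok_ge0.
Qed.
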